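(* Let $I \subset K[x,y]$ be a monomial ideal with $G(I)=\{u_0,\ldots,u_m\}$, $u_i=x^{a_i}y^{b_i}$, ordered so that $a_0>a_1>\cdots>a_m$ and $b_0<b_1<\cdots<b_m$, and let $d_i=\deg(u_i)=a_i+b_i$. Then $I$ is componentwise polymatroidal if and only if all of the following hold: (i) for each $0\le i<m$ with $d_i>d_{i+1}$: $a_i-1>a_{i+1}$ and $b_{i+1}=b_i+1$; (ii) for each $0\le i<m$ with $d_i<d_{i+1}$: $b_i+1<b_{i+1}$ and $a_{i+1}=a_i-1$; (iii) for each $0\le i<m$ with $d_i=d_{i+1}$: $b_{i+1}=b_i+1$ and $a_{i+1}=a_i-1$; (iv) there exists $0\le j\le m$ with $d_0\ge d_1\ge\cdots\ge d_j\le d_{j+1}\le\cdots\le d_m$.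
   Context: $G(I)$ is the minimal monomial generating set; $\deg_{x}(u)$ is the exponent of $x$ in $u$. A monomial ideal generated in a single degree is polymatroidal if for all $u,v\in G(I)$ and all variables $z$ with $\deg_{z}(u)>\deg_{z}(v)$ there exists a variable $w$ with $\deg_{w}(u)<\deg_{w}(v)$ and $w(u/z)\in I$. $I_{\langle j\rangle}$ denotes the ideal generated by all monomials of degree $j$ in $I$; $I$ is componentwise polymatroidal if every nonzero $I_{\langle j\rangle}$ is polymatroidal. *)

(* Monomials of K[x,y] are represented by exponent pairs
   (a,b) <-> x^a y^b.  A monomial ideal of K[x,y] is determined by the set of
   monomials it contains, which is an up-closed (under divisibility) subset
   of N^2; the field K plays no role in any notion below. *)
From Stdlib Require Import Arith Lia.

Definition mono := (nat * nat)%type.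

(* variables: false = x, true = y;  degz z u = deg_z(u) *)
Definition degz (z : bool) (u : mono) : nat := if z then snd u else fst u.

Definition mdeg (u : mono) : nat := fst u + snd u.

Definition mdiv (u v : mono) : Prop := fst u <= fst v /\ snd u <= snd v.

Definition mideal := mono -> Prop.

Definition is_monomial_ideal (I : mideal) : Prop :=
  forall u v, I u -> mdiv u v -> I v.

Definition Gens (I : mideal) (u : mono) : Prop :=
  I u /\ forall v, I v -> mdiv v u -> v = u.

Definition comp (I : mideal) (j : nat) : mideal :=
  fun w => exists u, I u /\ mdeg u = j /\ mdiv u w.

Definition nonzero (I : mideal) : Prop := exists u, I u.

Definition decr (z : bool) (u : mono) : mono :=
  if z then (fst u, snd u - 1) else (fst u - 1, snd u).
Definition incr (w : bool) (u : mono) : mono :=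
  if w then (fst u, snd u + 1) else (fst u + 1, snd u).
Definition exch (w z : bool) (u : mono) : mono := incr w (decr z u).

Definition single_degree (I : mideal) : Prop :=
  exists d, forall u, Gens I u -> mdeg u = d.

Definition polymatroidal (I : mideal) : Prop :=
  single_degree I /\
  forall u v, Gens I u -> Gens I v ->
  forall z, degz z u > degz z v ->
  exists w, degz w u < degz w v /\ I (exch w z u).

Definition componentwise_polymatroidal (I : mideal) : Prop :=
  forall j, nonzero (comp I j) -> polymatroidal (comp I j).

From Stdlib Require Import Arith Lia Classical.

(* A monomial x^c y^e lies in I iff some generator u_i = x^(a i) y^(b i)
   divides it.  Hence, in degree j, the x-exponents of the degree-j monomials
   of I form the union of the intervals [a i, j - b i], and these intervals
   move to the left as i grows.  The argument has three layers:
   1. For any monomial ideal in two variables, I_<j> is polymatroidal iff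
      the set of x-exponents of its degree-j monomials is convex ("the
      degree-j slice is convex"); so I is componentwise polymatroidal iff
      every slice is convex.
   2. For the staircase I, every slice is convex iff the "gap condition"
      holds: whenever u_p, u_k have degree <= j and every generator strictly
      between them has degree > j, the intervals of u_p and u_k overlap or
      abut, i.e. a p + b k <= j + 1.
   3. The gap condition is equivalent to (i)-(iv): for adjacent generators
      it is exactly (i)-(iii); for non-adjacent ones it forbids "humps" of
      the degree sequence, and a sequence without humps is valley-shaped. *)

Lemma last_in_range (P : nat -> Prop) (lo hi : nat) :
  lo <= hi -> P lo ->
  exists p, lo <= p <= hi /\ P p /\ forall l, p < l <= hi -> ~ P l.
Proof.
  intros Hle HP. induction hi as [|hi IH].
  - exists lo. split; [lia|split; [auto|intros; lia]].
  - destruct (classic (P (S hi))) as [H|H].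
    + exists (S hi). split; [lia|split; [auto|intros; lia]].
    + destruct (Nat.eq_dec lo (S hi)) as [E|E]; [subst; contradiction|].
      destruct IH as [p [Hp1 [Hp2 Hp3]]]; [lia|].
      exists p. split; [lia|split; [auto|]].
      intros l Hl. destruct (Nat.eq_dec l (S hi)); [subst; auto|apply Hp3; lia].
Qed.

Lemma first_in_range (P : nat -> Prop) (lo hi : nat) :
  lo <= hi -> P hi ->
  exists k, lo <= k <= hi /\ P k /\ forall l, lo <= l < k -> ~ P l.
Proof.
  intros Hle HP.
  destruct (last_in_range (fun x => P (hi + lo - x)) lo hi Hle)
    as [p [Hp1 [Hp2 Hp3]]].
  { replace (hi + lo - lo) with hi by lia. exact HP. }
  exists (hi + lo - p). split; [lia|split; [exact Hp2|]].
  intros l Hl HPl. apply (Hp3 (hi + lo - l)); [lia|].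
  replace (hi + lo - (hi + lo - l)) with l by lia. exact HPl.
Qed.

Lemma nondecr_between (d : nat -> nat) (j n : nat) :
  (forall i, j <= i -> i < n -> d i <= d (S i)) ->
  forall x y, j <= x -> x <= y -> y <= n -> d x <= d y.
Proof.
  intros H x y Hx Hxy Hy. induction y as [|y IH].
  - replace x with 0 by lia. lia.
  - destruct (Nat.eq_dec x (S y)) as [->|Hne]; [lia|].
    specialize (IH ltac:(lia) ltac:(lia)). specialize (H y ltac:(lia) ltac:(lia)).
    lia.
Qed.

Lemma nonincr_between (d : nat -> nat) (j : nat) :
  (forall i, i < j -> d (S i) <= d i) ->
  forall x y, x <= y -> y <= j -> d y <= d x.
Proof.
  intros H x y Hxy Hy. induction y as [|y IH].
  - replace x with 0 by lia. lia.
  - destruct (Nat.eq_dec x (S y)) as [->|Hne]; [lia|].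
    specialize (IH ltac:(lia) ltac:(lia)). specialize (H y ltac:(lia)). lia.
Qed.

Definition valley (d : nat -> nat) (n : nat) : Prop :=
  exists j, j <= n /\ (forall i, i < j -> d (S i) <= d i) /\
            (forall i, j <= i -> i < n -> d i <= d (S i)).

Definition hump (d : nat -> nat) (n p k : nat) : Prop :=
  p + 2 <= k /\ k <= n /\ forall l, p < l < k -> d l > Nat.max (d p) (d k).

(* A strict peak d x < d y > d z encloses a hump: shrink [x, z] to the
   nearest indices around y whose value is at most max (d x) (d z). *)
Lemma hump_of_peak (d : nat -> nat) (n x y z : nat) :
  x < y -> y < z -> z <= n -> d x < d y -> d z < d y -> exists p k, hump d n p k.
Proof.
  intros Hxy Hyz Hzn Hx Hz.
  set (low := fun t => d t <= Nat.max (d x) (d z)).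
  destruct (first_in_range low (S y) z) as [k [Hk [Lk Hk_first]]];
    [lia|unfold low; lia|].
  destruct (last_in_range low x (k - 1)) as [p [Hp [Lp Hp_last]]];
    [lia|unfold low; lia|].
  assert (Hpy : p < y).
  { destruct (Nat.lt_ge_cases p y) as [h|h]; [exact h|exfalso].
    destruct (Nat.eq_dec p y) as [->|Hne]; [unfold low in Lp; lia|].
    apply (Hk_first p); [lia|exact Lp]. }
  exists p, k. split; [lia|split; [lia|]].
  intros l Hl. assert (~ low l) by (apply Hp_last; lia). unfold low in *. lia.
Qed.

(* A sequence without humps is valley-shaped: take j to be the first index
   where d strictly increases; a later strict decrease would create a peak. *)
Lemma valley_of_no_hump (d : nat -> nat) (n : nat) :
  (forall p k, ~ hump d n p k) -> valley d n.
Proof.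
  intros no_hump.
  destruct (first_in_range (fun x => x = n \/ d x < d (S x)) 0 n)
    as [j [Hj [Pj Hj_first]]]; [lia|left; reflexivity|].
  exists j. split; [lia|split].
  - intros i Hi. assert (~ (i = n \/ d i < d (S i))) by (apply Hj_first; lia).
    lia.
  - intros i Hji Hin.
    destruct (le_lt_dec (d i) (d (S i))) as [ok|drop]; [exact ok|exfalso].
    destruct Pj as [->|rise]; [lia|].
    destruct (le_lt_dec (d i) (d j)) as [low|high].
    +
      assert (S j < i).
      { destruct (Nat.eq_dec i j) as [->|]; [lia|].
        destruct (Nat.eq_dec i (S j)) as [->|]; lia. }
      destruct (hump_of_peak d n j (S j) i) as [p [k Hhump]]; try lia.
      exact (no_hump p k Hhump).
    +
      assert (j < i) by (destruct (Nat.eq_dec i j) as [->|]; lia).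
      destruct (hump_of_peak d n j i (S i)) as [p [k Hhump]]; try lia.
      exact (no_hump p k Hhump).
Qed.

(* Every monomial of I is divisible by a minimal generator (induction on
   the degree: a non-minimal element has a proper divisor in I). *)
Lemma gen_divides (I : mideal) (u : mono) :
  I u -> exists g, Gens I g /\ mdiv g u.
Proof.
  induction u as [u IH] using (well_founded_induction (well_founded_ltof mono mdeg)).
  intros Iu.
  destruct (classic (exists v, I v /\ mdiv v u /\ v <> u))
    as [[v [Iv [Dvu Nvu]]]|minimal].
  - destruct (IH v) as [g [Gg Dgv]]; [|exact Iv|].
    + destruct u as [u1 u2], v as [v1 v2]. unfold ltof, mdiv, mdeg in *.
      simpl in *.
      assert (v1 <> u1 \/ v2 <> u2)
        by (destruct (Nat.eq_dec v1 u1), (Nat.eq_dec v2 u2); subst; tauto).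
      lia.
    + exists g. split; [exact Gg|]. unfold mdiv in *. lia.
  - exists u. split; [split; [exact Iu|]|unfold mdiv; lia].
    intros v Iv Dvu. apply NNPP. intro Nvu. apply minimal. eauto.
Qed.

Lemma staircase_membership (I : mideal) (m : nat) (a b : nat -> nat) :
  is_monomial_ideal I ->
  (forall u, Gens I u <-> exists i, i <= m /\ u = (a i, b i)) ->
  forall c e, I (c, e) <-> exists i, i <= m /\ a i <= c /\ b i <= e.
Proof.
  intros HI HG c e. split.
  - intros Ice. destruct (gen_divides I (c, e) Ice) as [g [Gg Dg]].
    apply HG in Gg. destruct Gg as [i [Hi ->]].
    unfold mdiv in Dg. simpl in Dg. exists i. lia.
  - intros [i [Hi [Hc He]]]. apply (HI (a i, b i)).
    + apply HG. eauto.
    + unfold mdiv. simpl. lia.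
Qed.

Lemma comp_gens (I : mideal) : is_monomial_ideal I ->
  forall j w, Gens (comp I j) w <-> I w /\ mdeg w = j.
Proof.
  intros HI j [w1 w2]. split.
  - intros [[u [Iu [Du Duw]]] Hmin].
    assert (u = (w1, w2)) as <-.
    { apply Hmin; [|exact Duw]. exists u. unfold mdiv. auto. }
    auto.
  - intros [Iw Dw]. split.
    + exists (w1, w2). unfold mdiv. simpl. auto.
    + intros [v1 v2] [[u1 u2] [_ [Du Duv]]] Dvw.
      unfold mdiv, mdeg in *. simpl in *. f_equal; lia.
Qed.

Definition slice_convex (I : mideal) (j : nat) : Prop :=
  forall c' t c, c' <= t -> t <= c -> c <= j ->
  I (c, j - c) -> I (c', j - c') -> I (t, j - t).

(* Polymatroidal slices are convex: exchanging x for y between x^c y^(j-c)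
   and x^c' y^(j-c') walks from c down to c' through I. *)
Lemma cp_slices_convex (I : mideal) : is_monomial_ideal I ->
  componentwise_polymatroidal I -> forall j, slice_convex I j.
Proof.
  intros HI CP j c' t c Hc't Htc Hcj Ic Ic'.
  assert (Gdeg : forall x, x <= j -> I (x, j - x) -> Gens (comp I j) (x, j - x))
    by (intros x Hx Ix; apply comp_gens; [exact HI|split; [exact Ix|unfold mdeg; simpl; lia]]).
  destruct (CP j) as [_ exchange].
  { exists (c, j - c), (c, j - c). unfold mdeg, mdiv. simpl. repeat split; auto; lia. }
  assert (walk : forall k, k <= c - t -> I (c - k, j - (c - k))).
  { induction k as [|k IH]; intros Hk; [rewrite Nat.sub_0_r; exact Ic|].
    destruct (exchange (c - k, j - (c - k)) (c', j - c')
                (Gdeg (c - k) ltac:(lia) (IH ltac:(lia))) (Gdeg c' ltac:(lia) Ic') false)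
      as [w [Hw [u [Iu [_ Duw]]]]]; [simpl; lia|].
    destruct w; simpl in Hw; [|lia].
    apply (HI u _ Iu). unfold exch, incr, decr, mdiv in *. simpl in *. lia. }
  replace t with (c - (c - t)) by lia. apply walk. lia.
Qed.

(* Conversely, with convex slices the exchange step always stays in the
   slice, so every I_<j> is polymatroidal. *)
Lemma slices_convex_cp (I : mideal) : is_monomial_ideal I ->
  (forall j, slice_convex I j) -> componentwise_polymatroidal I.
Proof.
  intros HI HC j _. split.
  - exists j. intros u Hu. apply comp_gens in Hu; tauto.
  - intros [u1 u2] [v1 v2] Hu Hv z Hz.
    apply comp_gens in Hu; auto. apply comp_gens in Hv; auto.
    destruct Hu as [Iu Du], Hv as [Iv Dv]. unfold mdeg in *. simpl in *.
    replace u2 with (j - u1) in Iu by lia. replace v2 with (j - v1) in Iv by lia.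
    destruct z; simpl in Hz.
    + exists false. split; [simpl; lia|].
      exists (u1 + 1, j - (u1 + 1)).
      split; [apply (HC j u1 (u1 + 1) v1); auto; lia|].
      unfold exch, incr, decr, mdeg, mdiv. simpl. lia.
    + exists true. split; [simpl; lia|].
      exists (u1 - 1, j - (u1 - 1)).
      split; [apply (HC j v1 (u1 - 1) u1); auto; lia|].
      unfold exch, incr, decr, mdeg, mdiv. simpl. lia.
Qed.

Definition staircase_conditions (m : nat) (a b : nat -> nat) : Prop :=
  let d := fun i => a i + b i in
  (forall i, i < m -> d i > d (S i) -> a i - 1 > a (S i) /\ b (S i) = b i + 1) /\
  (forall i, i < m -> d i < d (S i) -> b i + 1 < b (S i) /\ a (S i) = a i - 1) /\
  (forall i, i < m -> d i = d (S i) -> b (S i) = b i + 1 /\ a (S i) = a i - 1) /\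
  valley d m.

Section Staircase.

Variables (m : nat) (a b : nat -> nat).
Hypothesis a_decr : forall i, i < m -> a (S i) < a i.
Hypothesis b_incr : forall i, i < m -> b i < b (S i).

Lemma a_gap : forall i k, i <= k -> k <= m -> a k + (k - i) <= a i.
Proof.
  intros i k Hik Hk. induction k as [|k IH].
  - replace i with 0 by lia. simpl. lia.
  - destruct (Nat.eq_dec i (S k)) as [->|Hne]; [rewrite Nat.sub_diag; lia|].
    specialize (IH ltac:(lia) ltac:(lia)). specialize (a_decr k ltac:(lia)). lia.
Qed.

Lemma b_gap : forall i k, i <= k -> k <= m -> b i + (k - i) <= b k.
Proof.
  intros i k Hik Hk. induction k as [|k IH].
  - replace i with 0 by lia. simpl. lia.
  - destruct (Nat.eq_dec i (S k)) as [->|Hne]; [rewrite Nat.sub_diag; lia|].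
    specialize (IH ltac:(lia) ltac:(lia)). specialize (b_incr k ltac:(lia)). lia.
Qed.

(* Generators u_p, u_k of degree <= j with only generators of degree > j in
   between contribute overlapping or abutting intervals [a p, j - b p] and
   [a k, j - b k] to the degree-j slice. *)
Definition gap_condition : Prop :=
  forall p k j, p < k -> k <= m -> a p + b p <= j -> a k + b k <= j ->
  (forall l, p < l -> l < k -> a l + b l > j) -> a p + b k <= j + 1.

(* The gap condition, in the form of the theorem: (i)-(iii) are the case of
   adjacent generators, and (iv) holds because there are no humps. *)
Lemma gap_conditions : gap_condition -> staircase_conditions m a b.
Proof.
  intros gap.
  assert (adjacent : forall i j, i < m -> a i + b i <= j -> a (S i) + b (S i) <= j ->
                     a i + b (S i) <= j + 1)
    by (intros i j Hi Hdi Hdj; apply gap; try lia; intros; lia).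
  unfold staircase_conditions. cbv zeta beta.
  split; [|split; [|split]]; [intros i Hi Hd ..|].
  - specialize (adjacent i (a i + b i) Hi ltac:(lia) ltac:(lia)).
    specialize (b_incr i Hi). lia.
  - specialize (adjacent i (a (S i) + b (S i)) Hi ltac:(lia) ltac:(lia)).
    specialize (a_decr i Hi). lia.
  - specialize (adjacent i (a i + b i) Hi ltac:(lia) ltac:(lia)).
    specialize (a_decr i Hi). specialize (b_incr i Hi). lia.
  - apply valley_of_no_hump. intros p k [Hpk [Hk between]]. cbv beta in between.
    specialize (gap p k (Nat.max (a p + b p) (a k + b k)) ltac:(lia) Hk
                  ltac:(lia) ltac:(lia) ltac:(intros l Hl1 Hl2; apply between; lia)).
    specialize (a_gap p k ltac:(lia) Hk). specialize (b_gap p k ltac:(lia) Hk).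
    lia.
Qed.

(* Conversely (i)-(iv) give the gap condition: adjacent generators are
   handled by (i)-(iii), and non-adjacent ones cannot occur since a valley
   has no index of larger degree between two indices of degree <= j. *)
Lemma conditions_gap : staircase_conditions m a b -> gap_condition.
Proof.
  intros [C1 [C2 [C3 [j0 [Hj0 [Hdec Hinc]]]]]] p k j Hpk Hk Hpj Hkj between.
  destruct (Nat.eq_dec k (S p)) as [->|Hfar].
  - specialize (a_decr p ltac:(lia)). specialize (b_incr p ltac:(lia)).
    destruct (lt_eq_lt_dec (a p + b p) (a (S p) + b (S p))) as [[Hd|Hd]|Hd];
      [destruct (C2 p ltac:(lia) Hd) | destruct (C3 p ltac:(lia) Hd)
      | destruct (C1 p ltac:(lia) Hd)]; lia.
  - exfalso. specialize (between (S p) ltac:(lia) ltac:(lia)).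
    destruct (le_lt_dec (S p) j0).
    + specialize (nonincr_between _ j0 Hdec p (S p) ltac:(lia) ltac:(lia)).
      cbv beta. lia.
    + specialize (nondecr_between _ j0 m Hinc (S p) k ltac:(lia) ltac:(lia) Hk).
      cbv beta. lia.
Qed.

Variable I : mideal.
Hypothesis membership :
  forall c e, I (c, e) <-> exists i, i <= m /\ a i <= c /\ b i <= e.

(* Convex slices force the gap condition: otherwise x^(a p - 1) y^(j-a p+1)
   lies in the slice between the multiples of u_k and u_p, but no generator
   divides it. *)
Lemma slices_convex_gap : (forall j, slice_convex I j) -> gap_condition.
Proof.
  intros HC p k j Hpk Hk Hpj Hkj between.
  destruct (le_lt_dec (a p + b k) (j + 1)) as [ok|far]; [exact ok|exfalso].
  specialize (a_gap p k ltac:(lia) Hk) as Hapk.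
  assert (Imid : I (a p - 1, j - (a p - 1))).
  { apply (HC j (j - b k) (a p - 1) (a p)); try lia;
      apply membership; [exists p | exists k]; lia. }
  apply membership in Imid. destruct Imid as [l [Hl [Hal Hbl]]].
  destruct (le_lt_dec l p) as [Hlp|Hlp].
  - specialize (a_gap l p Hlp ltac:(lia)). lia.
  - destruct (le_lt_dec k l) as [Hkl|Hkl].
    + specialize (b_gap k l Hkl Hl). lia.
    + specialize (between l Hlp Hkl). lia.
Qed.

(* The gap condition makes every slice convex: between the generators
   covering c and c', take the last one p of degree <= j with a p > t and
   the next one k of degree <= j; the gap condition shows u_k covers t. *)
Lemma gap_slices_convex : gap_condition -> forall j, slice_convex I j.
Proof.
  intros gap j c' t c Hc't Htc Hcj Ic Ic'.
  apply membership in Ic. apply membership in Ic'. apply membership.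
  destruct Ic as [g [Hg [Hag Hbg]]], Ic' as [g' [Hg' [Hag' Hbg']]].
  destruct (le_lt_dec (a g) t) as [Hgt|Hgt]; [exists g; lia|].
  destruct (le_lt_dec (b g') (j - t)) as [Hg't|Hg't]; [exists g'; lia|].
  assert (g < g').
  { destruct (le_lt_dec g' g) as [h|h]; [|exact h].
    specialize (a_gap g' g h Hg). lia. }
  destruct (last_in_range (fun x => a x + b x <= j /\ a x > t) g g')
    as [p [Hp [[Hpj Hpt] Hp_last]]]; [lia|lia|].
  assert (p < g') by (destruct (Nat.eq_dec p g') as [->|]; lia).
  destruct (first_in_range (fun x => a x + b x <= j) (S p) g')
    as [k [Hk [Hkj Hk_first]]]; [lia|lia|].
  assert (a k <= t).
  { destruct (le_lt_dec (a k) t) as [h|h]; [exact h|exfalso].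
    apply (Hp_last k); [lia|auto]. }
  assert (a p + b k <= j + 1).
  { apply gap; try lia. intros l Hl1 Hl2.
    destruct (le_lt_dec (a l + b l) j) as [h|h]; [|exact h].
    exfalso. apply (Hk_first l); [lia|exact h]. }
  exists k. lia.
Qed.

End Staircase.

Theorem theorem2p6 (I : mideal) (m : nat) (a b : nat -> nat) :
  is_monomial_ideal I ->
  (forall u, Gens I u <-> exists i, i <= m /\ u = (a i, b i)) ->
  (forall i, i < m -> a (S i) < a i) ->
  (forall i, i < m -> b i < b (S i)) ->
  let d := fun i => a i + b i in
  componentwise_polymatroidal I <->
  ((forall i, i < m -> d i > d (S i) -> a i - 1 > a (S i) /\ b (S i) = b i + 1) /\
   (forall i, i < m -> d i < d (S i) -> b i + 1 < b (S i) /\ a (S i) = a i - 1) /\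
   (forall i, i < m -> d i = d (S i) -> b (S i) = b i + 1 /\ a (S i) = a i - 1) /\
   (exists j, j <= m /\
      (forall i, i < j -> d (S i) <= d i) /\
      (forall i, j <= i -> i < m -> d i <= d (S i)))).
Proof.
  intros HI HG Ha Hb d.
  change (componentwise_polymatroidal I <-> staircase_conditions m a b).
  pose proof (staircase_membership I m a b HI HG) as membership.
  split.
  - intros CP. apply gap_conditions; auto.
    apply (slices_convex_gap m a b Ha Hb I membership).
    exact (cp_slices_convex I HI CP).
  - intros conditions. apply slices_convex_cp; [exact HI|].
    apply (gap_slices_convex m a b Ha I membership).
    exact (conditions_gap m a b Ha Hb conditions).
Qed.
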